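(* Let $R$ be a unital commutative Hausdorff topological ring whose group of units $R^\times$ is dense in $R$, and let $\lambda=\lambda^n$ with $n\in\mathbb N\cup\{\infty\}$. Then the group of units $\lambda^\times$ is dense in $\lambda$.
   Context: For $n\in\mathbb N$, $\lambda^n=R[\theta_1,\dots,\theta_n]$ is the Grassmann algebra over $R$ on odd generators $\theta_1,\dots,\theta_n$, i.e. $\lambda^n=\bigoplus_I R\theta_I$ over strictly increasing multi-indices $I$, with the product topology; $\lambda^\infty=R[\theta_i:i\in\mathbb N]=\bigcup_n\lambda^n$ with the direct limit topology with respect to the inclusions $\lambda^n\to\lambda^\infty$. *)

From HB Require Import structures.
From mathcomp Require Import all_boot all_algebra finmap.
From mathcomp Require Import all_classical all_reals topology.
Set Implicit Arguments. Unset Strict Implicit. Unset Printing Implicit Defensive.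
Import GRing.Theory.
Local Open Scope classical_set_scope.
Local Open Scope ring_scope.

HB.structure Definition TopComRing := {R of Topological R & GRing.ComPzRing R}.

Definition topological_ring (R : TopComRing.type) : Prop :=
  [/\ continuous (fun p : R * R => fst p + snd p),
      continuous (fun x : R => - x) &
      continuous (fun p : R * R => fst p * snd p)].

Definition units_of (R : TopComRing.type) : set R :=
  [set x | exists y : R, x * y = 1].

Inductive nbar := Fin of nat | Inf.

(* An element sum_I a_I theta_I of a Grassmann algebra over R is stored
   as its coefficient function I |-> a_I, where a strictly increasing
   multi-index I is identified with the finite set {fset nat} of its entries. *)
Definition gr (R : TopComRing.type) := {fset nat} -> R.

Definition idx_lt (N : nat) (I : {fset nat}) : Prop := forall i, i \in I -> (i < N)%N.

Definition supp_lt (R : TopComRing.type) (N : nat) (f : gr R) : Prop :=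
  forall I, f I != 0 -> idx_lt N I.

Definition lam (R : TopComRing.type) (n : nbar) : set (gr R) :=
  match n with
  | Fin N => [set f | supp_lt N f]
  | Inf => [set f | exists N, supp_lt N f]
  end.

(* sign of theta_I theta_J = sign * theta_{I u J} for disjoint I, J:
   (-1)^(number of pairs i in I, j in J with j < i) *)
Definition gsign (R : TopComRing.type) (I J : {fset nat}) : R :=
  (-1) ^+ (\sum_(i <- I) \sum_(j <- J) (j < i)%N)%N.

Definition gone (R : TopComRing.type) : gr R := fun I => if I == fset0 then 1 else 0.

Definition gmul (R : TopComRing.type) (f g : gr R) : gr R :=
  fun K => \sum_(I <- fpowerset K) gsign R I (K `\` I)%fset * f I * g (K `\` I)%fset.

Definition lam_unit (R : TopComRing.type) (n : nbar) : set (gr R) :=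
  [set x | lam n x /\ exists y, lam n y /\ gmul x y = gone R /\ gmul y x = gone R].

(* open subsets of lambda^N (N finite) for the product topology on
   lambda^N = prod_{I subset {0..N-1}} R theta_I (finitely many factors) *)
Definition prod_open (R : TopComRing.type) (N : nat) (U : set (gr R)) : Prop :=
  U `<=` lam (Fin N) /\
  forall a, U a -> exists W : {fset nat} -> set R,
    (forall I, idx_lt N I -> nbhs (a I) (W I)) /\
    (forall b, lam (Fin N) b -> (forall I, idx_lt N I -> W I (b I)) -> U b).

(* open subsets of lambda^n: product topology for finite n, direct limit
   topology w.r.t. the inclusions lambda^N -> lambda^oo for n = oo *)
Definition lam_open (R : TopComRing.type) (n : nbar) (U : set (gr R)) : Prop :=
  match n with
  | Fin N => prod_open N U
  | Inf => U `<=` lam Inf /\ forall N, prod_open N (U `&` lam (Fin N))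
  end.

Definition lam_dense (R : TopComRing.type) (n : nbar) (D : set (gr R)) : Prop :=
  forall U, lam_open n U -> U !=set0 -> U `&` D !=set0.

Arguments units_of R : clear implicits.
Arguments lam R n : clear implicits.
Arguments lam_unit R n : clear implicits.
Arguments lam_open R n U : clear implicits.
Arguments lam_dense R n D : clear implicits.

From HB Require Import structures.
From mathcomp Require Import all_boot all_algebra finmap.
From mathcomp Require Import all_classical all_reals topology.
From mathcomp Require Import ring zify.

(* An element x of a Grassmann algebra whose constant coefficient x_0 is a
   unit of R is itself a unit: in (x y)_K the coefficient y_K occurs only in
   the term x_0 y_K, all other terms involving y_J with |J| < |K|, so the
   coefficients of a right (and likewise a left) inverse are obtained by
   recursion on |K|.  Associativity makes both inverses equal, and the
   recursion introduces no new generators, so the inverse lies in lambda^N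
   together with x.
   Given a nonempty open set of lambda^N, move the constant coefficient of one
   of its points to a nearby unit of R (units are dense in R) and keep the
   other coefficients: the new point stays in the open set and is a unit.
   For n = oo this is done inside some lambda^N. *)

Local Open Scope classical_set_scope.
Import GRing.Theory.
Local Open Scope ring_scope.

Lemma big_fsetU_disjoint (T : choiceType) (S : Type) (idx : S)
    (op : Monoid.com_law idx) (F : T -> S) (A B : {fset T}) :
  [disjoint A & B]%fset ->
  \big[op/idx]_(i <- (A `|` B)%fset) F i =
    op (\big[op/idx]_(i <- A) F i) (\big[op/idx]_(i <- B) F i).
Proof.
move=> /fdisjointP_sym dAB; rewrite -big_cat; apply: perm_big; apply: uniq_perm.
- exact: fset_uniq.
- by rewrite cat_uniq !fset_uniq /= andbT; apply/hasPn.
- by move=> i; rewrite mem_cat in_fsetU.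
Qed.

Lemma fsetUKD {T : choiceType} {I B : {fset T}} :
  [disjoint B & I]%fset -> ((I `|` B) `\` I)%fset = B.
Proof. by rewrite fsetDUl fsetDv fset0U => /fsetDidPl. Qed.

Lemma fsetUDK {T : choiceType} {I A : {fset T}} :
  (I `<=` A)%fset -> (I `|` (A `\` I))%fset = A.
Proof. by rewrite fsetUDl fsetDv fsetD0 => /fsetUidPr. Qed.

Lemma big_fpowerset_sub {T : choiceType} {V : nmodType} (G : {fset T} -> V)
    {A K : {fset T}} :
  (A `<=` K)%fset ->
  \sum_(I <- fpowerset A) G I = \sum_(I <- fpowerset K | (I `<=` A)%fset) G I.
Proof.
move=> sAK; rewrite -[RHS]big_filter; apply: perm_big; apply: uniq_perm.
- exact: fset_uniq.
- exact/filter_uniq/fset_uniq.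
- move=> I; rewrite mem_filter !fpowersetE.
  by case sIA: (I `<=` A)%fset => //=; rewrite (fsubset_trans sIA sAK).
Qed.

Lemma big_fpowerset_supset {T : choiceType} {V : nmodType} (H : {fset T} -> V)
    {I K : {fset T}} :
  (I `<=` K)%fset ->
  \sum_(A <- fpowerset K | (I `<=` A)%fset) H A =
    \sum_(B <- fpowerset (K `\` I)%fset) H (I `|` B)%fset.
Proof.
move=> sIK; rewrite -[LHS]big_filter -(big_map (fun B => I `|` B)%fset xpredT).
apply: perm_big; apply: uniq_perm.
- exact/filter_uniq/fset_uniq.
- rewrite map_inj_in_uniq ?fset_uniq // => B1 B2.
  rewrite !fpowersetCE => /andP[_ dB1] /andP[_ dB2] eB.
  by rewrite -[B1](fsetUKD dB1) eB (fsetUKD dB2).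
- move=> A; rewrite mem_filter fpowersetE; apply/andP/mapP.
  + move=> [sIA sAK]; exists (A `\` I)%fset; last by rewrite fsetUDK.
    by rewrite fpowersetE fsetSD.
  + move=> [B]; rewrite fpowersetE => sB ->; split; first exact: fsubsetUl.
    by rewrite fsubUset sIK (fsubset_trans sB (fsubsetDl _ _)).
Qed.

Section GrassmannProduct.
Variable R : TopComRing.type.
Implicit Types (f g h : gr R) (I J K L : {fset nat}).

Lemma gsign0l K : gsign R fset0 K = 1.
Proof. by rewrite /gsign big_seq_fset0. Qed.

Lemma gsign0r K : gsign R K fset0 = 1.
Proof. by rewrite /gsign big1 // => i _; rewrite big_seq_fset0. Qed.

Lemma gsignUl I J L :
  [disjoint I & J]%fset -> gsign R (I `|` J)%fset L = gsign R I L * gsign R J L.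
Proof. by move=> dIJ; rewrite /gsign big_fsetU_disjoint // exprD. Qed.

Lemma gsignUr I J L :
  [disjoint J & L]%fset -> gsign R I (J `|` L)%fset = gsign R I J * gsign R I L.
Proof.
move=> dJL; rewrite /gsign -exprD -big_split /=; congr (_ ^+ _).
by apply: eq_bigr => i _; rewrite big_fsetU_disjoint.
Qed.

Lemma gmul1l f : gmul (gone R) f = f.
Proof.
apply/funext => K.
rewrite /gmul (bigD1_seq fset0) ?fpowersetE ?fsub0set ?fset_uniq //=.
rewrite big1 ?addr0 => [|I /negbTE nI]; last by rewrite /gone nI mulr0 mul0r.
by rewrite gsign0l /gone eqxx fsetD0 !mul1r.
Qed.

Lemma gmul1r f : gmul f (gone R) = f.
Proof.
apply/funext => K.
rewrite /gmul (bigD1_seq K) ?fpowersetE ?fsubset_refl ?fset_uniq //=.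
rewrite fsetDv gsign0r /gone eqxx !mulr1 mul1r big1_seq ?addr0 //.
move=> I /andP[nIK]; rewrite fpowersetE => sIK.
suff /negbTE-> : (K `\` I)%fset != fset0 by rewrite mulr0.
by rewrite fsetD_eq0; apply: contra nIK => sKI; rewrite eqEfsubset sIK sKI.
Qed.

(* Both sides are sums over pairs I <= A <= K; write A = I u B with B <= K \ I. *)
Lemma gmulA f g h : gmul (gmul f g) h = gmul f (gmul g h).
Proof.
apply/funext => K; rewrite /gmul.
transitivity (\sum_(A <- fpowerset K) \sum_(I <- fpowerset K | (I `<=` A)%fset)
  gsign R A (K `\` A)%fset * (gsign R I (A `\` I)%fset * f I * g (A `\` I)%fset)
  * h (K `\` A)%fset).
  rewrite [LHS]big_seq [RHS]big_seq; apply: eq_bigr => A; rewrite fpowersetE => sAK.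
  by rewrite (big_fpowerset_sub _ sAK) mulr_sumr mulr_suml.
rewrite (exchange_big_dep xpredT) //= [LHS]big_seq [RHS]big_seq.
apply: eq_bigr => I; rewrite fpowersetE => sIK.
rewrite (big_fpowerset_supset _ sIK) mulr_sumr [LHS]big_seq [RHS]big_seq.
apply: eq_bigr => B; rewrite fpowersetCE => /andP[sBK dBI].
set L := (K `\` I `\` B)%fset.
have dIB : [disjoint I & B]%fset by rewrite fdisjoint_sym.
have /fsubsetDP[sLKI dLB] : (L `<=` K `\` I `\` B)%fset by [].
have /fsubsetDP[_ dKII] : (K `\` I `<=` K `\` I)%fset by [].
have dBL : [disjoint B & L]%fset by rewrite fdisjoint_sym.
have dIL : [disjoint I & L]%fset by rewrite fdisjoint_sym (fdisjointWl sLKI).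
have KI_split : (K `\` I)%fset = (B `|` L)%fset by rewrite fsetUDK // fsubsetD sBK.
by rewrite fsetUKD // -fsetDDl -/L KI_split gsignUr // gsignUl //; ring.
Qed.

End GrassmannProduct.

Section MeasureRecursion.
Context {A B : Type}.
Variables (mu : A -> nat) (b0 : B) (F : A -> (A -> B) -> B).
Hypothesis F_guarded : forall a g g',
  (forall a', (mu a' < mu a)%N -> g a' = g' a') -> F a g = F a g'.

Fixpoint measure_iter (m : nat) : A -> B :=
  fun a => F a (if m is m'.+1 then measure_iter m' else fun=> b0).

Lemma measure_iter_stable m k a :
  (mu a <= m)%N -> (mu a <= k)%N -> measure_iter m a = measure_iter k a.
Proof.
elim: m k a => [|m IH] [|k] a /= ham hak; apply: F_guarded => a' lt_a'a //;
  first [lia | apply: IH; lia].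
Qed.

Definition measure_fix (a : A) : B := measure_iter (mu a) a.

Lemma measure_fixE a : measure_fix a = F a measure_fix.
Proof.
rewrite /measure_fix; case mu_a: (mu a) => [|m] /=; apply: F_guarded => a' lt_a'a.
- lia.
- apply: measure_iter_stable; lia.
Qed.

End MeasureRecursion.

Lemma card_fsetD_lt {T : choiceType} {I K : {fset T}} :
  (I `<=` K)%fset -> I != fset0 -> (#|` (K `\` I)%fset| < #|` K|)%N.
Proof.
move=> sIK nI; rewrite cardfsDS //.
have := fsubset_leq_card sIK; have : (0 < #|` I|)%N by rewrite lt0n cardfs_eq0.
lia.
Qed.

Section InverseOfUnitConstant.
Context {R : TopComRing.type}.
Variables (x : gr R) (v : R).
Hypothesis x0v : x fset0 * v = 1.

(* (x y)_K = 1_K, resp. (y x)_K = 1_K, solved for y_K, which occurs only in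
   the summand I = fset0, resp. I = K. *)
Definition rinv_step (K : {fset nat}) (y : gr R) : R :=
  v * (gone R K - \sum_(I <- fpowerset K | I != fset0)
                     gsign R I (K `\` I)%fset * x I * y (K `\` I)%fset).

Definition linv_step (K : {fset nat}) (y : gr R) : R :=
  (gone R K - \sum_(I <- fpowerset K | I != K)
                 gsign R I (K `\` I)%fset * y I * x (K `\` I)%fset) * v.

Definition grinv_r : gr R := measure_fix (fun K => #|` K|) 0 rinv_step.
Definition grinv_l : gr R := measure_fix (fun K => #|` K|) 0 linv_step.

Lemma grinv_rE K : grinv_r K = rinv_step K grinv_r.
Proof.
apply: measure_fixE => {}K y y' eq_y; congr (_ * (_ - _)).
rewrite big_seq_cond [RHS]big_seq_cond; apply: eq_bigr => I.
by rewrite fpowersetE => /andP[sIK nI]; rewrite eq_y // card_fsetD_lt.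
Qed.

Lemma grinv_lE K : grinv_l K = linv_step K grinv_l.
Proof.
apply: measure_fixE => {}K y y' eq_y; congr ((_ - _) * _).
rewrite big_seq_cond [RHS]big_seq_cond; apply: eq_bigr => I.
rewrite fpowersetE => /andP[sIK nIK]; rewrite eq_y //.
by apply: fproper_ltn_card; rewrite fproperEneq nIK.
Qed.

Lemma gmul_grinv_r : gmul x grinv_r = gone R.
Proof.
apply/funext => K.
rewrite /gmul (bigD1_seq fset0) ?fpowersetE ?fsub0set ?fset_uniq //=.
by rewrite gsign0l fsetD0 mul1r grinv_rE /rinv_step mulrA x0v mul1r; ring.
Qed.

Lemma gmul_grinv_l : gmul grinv_l x = gone R.
Proof.
apply/funext => K.
rewrite /gmul (bigD1_seq K) ?fpowersetE ?fsubset_refl ?fset_uniq //=.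
by rewrite fsetDv gsign0r mul1r grinv_lE /linv_step -mulrA (mulrC v) x0v mulr1; ring.
Qed.

Lemma grinv_l_r : grinv_l = grinv_r.
Proof.
by rewrite -[grinv_l]gmul1r -gmul_grinv_r -gmulA gmul_grinv_l gmul1l.
Qed.

Lemma supp_lt_grinv_r N : supp_lt N x -> supp_lt N grinv_r.
Proof.
move=> sx; suff grinv_r0 : forall K, ~ idx_lt N K -> grinv_r K = 0.
  by move=> K nz; apply: contrapT => /grinv_r0 K0; rewrite K0 eqxx in nz.
move=> K; have [m] := ubnP #|` K|; elim: m K => // m IH K ltKm nK.
have K0 : K != fset0 by apply/eqP => K0; apply: nK => i; rewrite K0 in_fset0.
rewrite grinv_rE /rinv_step /gone (negbTE K0) big_seq_cond big1 ?subr0 ?mulr0 //.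
move=> I /andP[]; rewrite fpowersetE => sIK nI.
have [->|/sx iI] := eqVneq (x I) 0; first by rewrite mulr0 mul0r.
rewrite IH ?mulr0 //; first by rewrite (leq_trans (card_fsetD_lt sIK nI)).
move=> iKI; apply: nK => i iK; have [/iI //|iNI] := boolP (i \in I).
by apply: iKI; rewrite inE iNI.
Qed.

End InverseOfUnitConstant.

Lemma lam_unit_of_unit_coef0 (R : TopComRing.type) N (x : gr R) :
  supp_lt N x -> units_of R (x fset0) -> lam_unit R (Fin N) x.
Proof.
move=> sx [v x0v]; split => //; exists (grinv_r x v); split.
  exact: supp_lt_grinv_r.
by split; [exact: gmul_grinv_r | rewrite -grinv_l_r //; exact: gmul_grinv_l].
Qed.

Lemma lam_unit_Fin_Inf (R : TopComRing.type) N (x : gr R) :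
  lam_unit R (Fin N) x -> lam_unit R Inf x.
Proof.
by move=> [sx [y [sy xy]]]; split; [exists N | exists y; split; first exists N].
Qed.

Lemma prod_open_meets_unit_coef0 {R : TopComRing.type} {N : nat} {U : set (gr R)} :
  dense (units_of R) -> prod_open N U -> U !=set0 ->
  exists2 b, U b & supp_lt N b /\ units_of R (b fset0).
Proof.
move=> units_dense [sUlam Uopen] [a Ua]; have [W [Wnbhs WU]] := Uopen a Ua.
have idx0 : idx_lt N fset0 by move=> i; rewrite in_fset0.
have := Wnbhs _ idx0; rewrite nbhsE => -[O [oO Oa0] sOW].
have [u [Ou uunit]] := units_dense O (ex_intro _ _ Oa0) oO.
pose b (I : {fset nat}) := if I == fset0 then u else a I.
have sb : supp_lt N b.
  move=> I; rewrite /b; have [-> _ | _] := eqVneq I fset0; [exact: idx0 | exact: sUlam].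
exists b; last by rewrite /b eqxx.
apply: WU => // I iI; rewrite /b; have [-> | _] := eqVneq I fset0; first exact: sOW.
exact: nbhs_singleton (Wnbhs I iI).
Qed.

Theorem lemma2p2 (R : TopComRing.type) (n : nbar) :
  topological_ring R ->
  hausdorff_space R ->
  dense (units_of R) ->
  lam_dense R n (lam_unit R n).
Proof.
move=> _ _ units_dense U; case: n => [N | /=] Uopen [a Ua].
  have [b Ub [sb ub]] := prod_open_meets_unit_coef0 units_dense Uopen (ex_intro _ a Ua).
  by exists b; split; last exact: lam_unit_of_unit_coef0.
have [Ulam UNopen] := Uopen; have [N sa] := Ulam a Ua.
have [b [Ub _] [sb ub]] :=
  prod_open_meets_unit_coef0 units_dense (UNopen N) (ex_intro _ a (conj Ua sa)).
exists b; split; first exact: Ub.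
apply: (@lam_unit_Fin_Inf _ N); exact: lam_unit_of_unit_coef0.
Qed.
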